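(* Let $n\ge 3$ and $h$ be integers with $1\le h\le n-2$, and let $\delta>1$. Let $D$ be the real symmetric $(n-1)\times(n-1)$ block matrix \[ D=\begin{bmatrix}(-3+\delta^2)J_h & -(1+\delta^2)J_{h,n-h-1}\\ -(1+\delta^2)J_{n-h-1,h} & (1-3\delta^2)J_{n-h-1}\end{bmatrix}, \] where $J_{p,q}$ is the $p\times q$ all-ones matrix and $J_p=J_{p,p}$. Then the spectrum of $D$ is $\{[a_2],[0]^{n-3},[a_1]\}$ (exponents denote multiplicities) with $a_2<0<a_1$, where for $i=1,2$ \[ a_i=-2(1-\delta^2)h+\frac{1-3\delta^2}{2}(n-1)+(-1)^{i+1}\sqrt{2(n-1)h(1-\delta^2)(1+\delta^2)+(n-1)^2\left(\frac{1-3\delta^2}{2}\right)^2}. \] *)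

From HB Require Import structures.
From mathcomp Require Import all_boot all_order all_algebra.
Set Implicit Arguments. Unset Strict Implicit. Unset Printing Implicit Defensive.
Import Order.TTheory GRing.Theory Num.Theory.
Local Open Scope ring_scope.

Definition Dmat (R : nzRingType) (n h : nat) (delta : R) :
  'M[R]_(h + (n - h - 1)) :=
  block_mx (const_mx (-3 + delta ^+ 2)) (const_mx (- (1 + delta ^+ 2)))
           (const_mx (- (1 + delta ^+ 2))) (const_mx (1 - 3 * delta ^+ 2)).

Definition a_val (R : rcfType) (n h : nat) (delta : R) (i : nat) : R :=
  - 2%:R * (1 - delta ^+ 2) * h%:R + (1 - 3 * delta ^+ 2) / 2%:R * (n - 1)%:R
  + (-1) ^+ (i + 1) *
    Num.sqrt (2%:R * (n - 1)%:R * h%:R * (1 - delta ^+ 2) * (1 + delta ^+ 2)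
              + (n - 1)%:R ^+ 2 * ((1 - 3 * delta ^+ 2) / 2%:R) ^+ 2).

From HB Require Import structures.
From mathcomp Require Import all_boot all_order all_algebra ring lra zify.
Set Implicit Arguments. Unset Strict Implicit. Unset Printing Implicit Defensive.
Import Order.TTheory GRing.Theory Num.Theory.
Local Open Scope ring_scope.

(* D has constant blocks, so D = U V with U of size (n-1) x 2 and V of size 2 x (n-1).
   By the Sylvester determinant identity X^2 det(X - UV) = X^(n-1) det(X - VU), so the
   spectrum of D is that of the 2 x 2 matrix VU, padded with n - 3 zeros.  VU has trace
   2 m and determinant -g with g = 4 (1 - delta^2)^2 h (n - h - 1) > 0, where m is the
   non-radical part of a_i; hence its eigenvalues are m +- sqrt(m^2 + g) = a_1, a_2,
   one on each side of 0. *)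

Lemma det_scalar_sub_mulmxC (K : comNzRingType) m k
    (U : 'M[K]_(m, k)) (V : 'M[K]_(k, m)) (x : K) :
  x ^+ k * \det (x%:M - U *m V) = x ^+ m * \det (x%:M - V *m U).
Proof.
pose M := block_mx x%:M U V (1%:M : 'M_k).
have eliml : block_mx 1%:M 0 (- V) x%:M *m M = block_mx x%:M U 0 (x%:M - V *m U).
  rewrite mulmx_block !mulmx1 !mul1mx !mul0mx !addr0 !mulNmx.
  by rewrite mul_scalar_mx mul_mx_scalar addNr addrC.
have elimr : M *m block_mx 1%:M 0 (- V) 1%:M = block_mx (x%:M - U *m V) U 0 1%:M.
  by rewrite mulmx_block !mulmx1 !mulmx0 !mulmxN mul1mx !add0r subrr.
have := congr1 determinant eliml.
rewrite det_mulmx det_lblock det_ublock !det_scalar expr1n mul1r => <-.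
have := congr1 determinant elimr.
by rewrite det_mulmx det_lblock det_ublock !det_scalar !expr1n !mulr1 => ->.
Qed.

Lemma det_mx22 (K : comNzRingType) (A : 'M[K]_2) : \det A = A 0 0 * A 1 1 - A 0 1 * A 1 0.
Proof.
rewrite (expand_det_row _ 0) !big_ord_recl big_ord0 /cofactor !det_mx11 !mxE /=.
rewrite addr0 expr0 expr1 !mul1r mulN1r mulrN.
by congr (_ * _ - _ * _); congr (A _ _); apply: val_inj.
Qed.

Section ConstBlockMatrices.
Variable K : comNzRingType.

Lemma char_poly_mulmxC m k (U : 'M[K]_(m, k)) (V : 'M[K]_(k, m)) :
  'X ^+ k * char_poly (U *m V) = 'X ^+ m * char_poly (V *m U).
Proof. rewrite /char_poly /char_poly_mx !map_mxM; exact: det_scalar_sub_mulmxC. Qed.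

Lemma char_poly_mx22 (A : 'M[K]_2) :
  char_poly A = 'X ^+ 2 - (A 0 0 + A 1 1)%:P * 'X + (A 0 0 * A 1 1 - A 0 1 * A 1 0)%:P.
Proof.
rewrite /char_poly det_mx22 /char_poly_mx !mxE /= mulr1n mulr0n !sub0r.
by rewrite polyCD polyCB !polyCM; ring.
Qed.

Definition const_block_mx {m1 m2 n1 n2} (a b c d : K) : 'M[K]_(m1 + m2, n1 + n2) :=
  block_mx (const_mx a) (const_mx b) (const_mx c) (const_mx d).

Lemma mul_const_mx m k n (a b : K) :
  (const_mx a : 'M_(m, k)) *m (const_mx b : 'M_(k, n)) = const_mx (a * b *+ k).
Proof.
apply/matrixP => i j; rewrite !mxE (eq_bigr (fun _ => a * b)) => [|l _].
  by rewrite sumr_const card_ord.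
by rewrite !mxE.
Qed.

Lemma mul_const_block_mx m1 m2 k1 k2 n1 n2 (a b c d a' b' c' d' : K) :
  (const_block_mx a b c d : 'M_(m1 + m2, k1 + k2)) *m
  (const_block_mx a' b' c' d' : 'M_(k1 + k2, n1 + n2)) =
  const_block_mx (a * a' *+ k1 + b * c' *+ k2) (a * b' *+ k1 + b * d' *+ k2)
                 (c * a' *+ k1 + d * c' *+ k2) (c * b' *+ k1 + d * d' *+ k2).
Proof. by rewrite mulmx_block !mul_const_mx -!raddfD. Qed.

Lemma char_poly_const_block_mx11 (a b c d : K) :
  char_poly (const_block_mx a b c d : 'M_(1 + 1)) =
  'X ^+ 2 - (a + d)%:P * 'X + (a * d - b * c)%:P.
Proof.
rewrite char_poly_mx22.
have -> : (0 : 'I_(1 + 1)) = lshift 1 0 by apply: val_inj.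
have -> : (1 : 'I_(1 + 1)) = rshift 1 0 by apply: val_inj.
rewrite /const_block_mx (@block_mxEul _ 1 1 1 1) (@block_mxEur _ 1 1 1 1).
by rewrite (@block_mxEdl _ 1 1 1 1) (@block_mxEdr _ 1 1 1 1) !mxE.
Qed.

Lemma char_poly_const_block_mx p q (a b c d : K) :
  'X ^+ 2 * char_poly (const_block_mx a b c d : 'M_(p + q)) =
  'X ^+ (p + q) * ('X ^+ 2 - (a *+ p + d *+ q)%:P * 'X + ((a * d - b * c) *+ (p * q))%:P).
Proof.
have -> : (const_block_mx a b c d : 'M_(p + q)) =
    (const_block_mx a b c d : 'M_(p + q, 1 + 1)) *m
    (const_block_mx 1 0 0 1 : 'M_(1 + 1, p + q)).
  by rewrite mul_const_block_mx !(mulr1, mulr0, mulr1n, addr0, add0r).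
rewrite char_poly_mulmxC (@mul_const_block_mx 1 1 p q 1 1) char_poly_const_block_mx11.
by rewrite !(mul1r, mul0r, mul0rn, addr0, add0r) !mulrnAl !mulrnAr -!mulrnA -mulrnBl mulnC.
Qed.

End ConstBlockMatrices.

Lemma mul_XsubC_sum_prod (K : comNzRingType) (x y s p : K) :
  x + y = s -> x * y = p -> ('X - x%:P) * ('X - y%:P) = 'X ^+ 2 - s%:P * 'X + p%:P.
Proof. by move=> <- <-; rewrite polyCD polyCM; ring. Qed.

Lemma norm_lt_sqrt_sqrD (R : rcfType) (t : R) {d : R} :
  0 < d -> `|t| < Num.sqrt (t ^+ 2 + d).
Proof.
move=> d_gt0; rewrite -sqrtr_sqr ltr_sqrt ?ltrDl //.
by rewrite (le_lt_trans (sqr_ge0 t)) ?ltrDl.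
Qed.

Section EigenvalueFormula.
Variables (R : rcfType) (n h : nat) (delta : R).
Hypothesis h_lt_n : (h < n)%N.

Let q := (n - h - 1)%N.
Let mid : R := - 2%:R * (1 - delta ^+ 2) * h%:R + (1 - 3 * delta ^+ 2) / 2%:R * (n - 1)%:R.
Let gap : R := 4%:R * (1 - delta ^+ 2) ^+ 2 * (h * q)%:R.
Let rad : R := Num.sqrt (mid ^+ 2 + gap).

Let natr_n1 : (n - 1)%:R = h%:R + q%:R :> R.
Proof. by rewrite -natrD /q; congr _%:R; lia. Qed.

Lemma a_valE i : a_val n h delta i = mid + (-1) ^+ (i + 1) * rad.
Proof.
rewrite /a_val /rad /mid /gap natr_n1 natrM; congr (_ + _ * Num.sqrt _).
by field.
Qed.

Lemma a_val1E : a_val n h delta 1 = mid + rad.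
Proof. by rewrite a_valE sqrrN expr1n mul1r. Qed.

Lemma a_val2E : a_val n h delta 2 = mid - rad.
Proof. by rewrite a_valE exprS sqrrN expr1n mulr1 mulN1r. Qed.

Let rad_sqr : rad ^+ 2 = mid ^+ 2 + gap.
Proof.
by rewrite sqr_sqrtr // addr_ge0 ?sqr_ge0 // mulr_ge0 ?ler0n // mulr_ge0 ?ler0n ?sqr_ge0.
Qed.

Lemma a_val_sum :
  a_val n h delta 2 + a_val n h delta 1 = (-3 + delta ^+ 2) *+ h + (1 - 3 * delta ^+ 2) *+ q.
Proof. by rewrite a_val1E a_val2E /mid natr_n1; field. Qed.

Lemma a_val_mul :
  a_val n h delta 2 * a_val n h delta 1 =
  ((-3 + delta ^+ 2) * (1 - 3 * delta ^+ 2) - (- (1 + delta ^+ 2)) * (- (1 + delta ^+ 2)))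
    *+ (h * q).
Proof.
rewrite a_val1E a_val2E.
have -> : (mid - rad) * (mid + rad) = mid ^+ 2 - rad ^+ 2 by ring.
by rewrite rad_sqr /gap -mulr_natr; ring.
Qed.

Hypotheses (h_gt0 : (0 < h)%N) (q_gt0 : (0 < q)%N) (delta_gt1 : 1 < delta).

Lemma a_val_sign : a_val n h delta 2 < 0 < a_val n h delta 1.
Proof.
have gap_gt0 : 0 < gap.
  have sqr_gt0 : 0 < (1 - delta ^+ 2) ^+ 2.
    by rewrite exprn_even_gt0 //= subr_eq0 lt_eqF // exprn_egt1.
  by rewrite /gap (mulr_gt0 (mulr_gt0 _ sqr_gt0)) // ltr0n muln_gt0 h_gt0.
have := norm_lt_sqrt_sqrD mid gap_gt0; rewrite -/rad ltr_norml => /andP[? ?].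
by rewrite a_val1E a_val2E; apply/andP; split; lra.
Qed.

End EigenvalueFormula.

Theorem mainTheorem4 (R : rcfType) (n h : nat) (delta : R)
  (hn : (3 <= n)%N) (hh1 : (1 <= h)%N) (hh2 : (h <= n - 2)%N) (hd : 1 < delta) :
  char_poly (Dmat n h delta)
    = ('X - (a_val n h delta 2)%:P) * 'X^(n - 3) * ('X - (a_val n h delta 1)%:P)
  /\ a_val n h delta 2 < 0 < a_val n h delta 1.
Proof.
have h_lt_n : (h < n)%N by lia.
have q_gt0 : (0 < n - h - 1)%N by lia.
split; last exact: a_val_sign.
have -> : Dmat n h delta = const_block_mx (-3 + delta ^+ 2) (- (1 + delta ^+ 2))
                                          (- (1 + delta ^+ 2)) (1 - 3 * delta ^+ 2) by [].
apply: (@mulfI _ ('X ^+ 2)); first by rewrite expf_neq0 // polyX_eq0.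
rewrite char_poly_const_block_mx.
rewrite -(mul_XsubC_sum_prod (a_val_sum delta h_lt_n) (a_val_mul delta h_lt_n)).
have -> : (h + (n - h - 1) = (n - 3) + 2)%N by lia.
by rewrite exprD; ring.
Qed.
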